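(* Let $\beta>0$, $\lambda_1,\dots,\lambda_d\in\mathbb R$, and let $p=(p_1,\dots,p_d)$, with $p_k\ge0$ and $\sum_kp_k=1$, solve \[ \dot p_k=2p_k\tanh(\beta M)(\lambda_k-M),\qquad M=\sum_{l=1}^d\lambda_lp_l. \] Let $I_0:=\{k:p_k(0)>0\}$, $\lambda_+:=\max_{k\in I_0}\lambda_k$, $\lambda_-:=\min_{k\in I_0}\lambda_k$, $I_\pm:=\{k\in I_0:\lambda_k=\lambda_\pm\}$. Then: (1) If $M(0)>0$, then $p_k(t)\to0$ for $k\notin I_+$, $p_k(t)\to p_k(0)/\sum_{j\in I_+}p_j(0)$ for $k\in I_+$, and $M(t)\to\lambda_+$. (2) If $M(0)<0$, then $p_k(t)\to0$ for $k\notin I_-$, $p_k(t)\to p_k(0)/\sum_{j\in I_-}p_j(0)$ for $k\in I_-$, and $M(t)\to\lambda_-$. (3) If $M(0)=0$, then $p_k(t)\equiv p_k(0)$ for all $t\ge0$ and $k\in[d]$.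
   Context: This is the reduced dynamics on the balanced bipolar manifold of the symmetric self-attention system with symmetric interaction matrix having eigenvalues $\lambda_k$; limits are as $t\to\infty$. *)

From HB Require Import structures.
From mathcomp Require Import all_boot all_order all_algebra.
From mathcomp Require Import all_classical all_reals all_analysis.
Set Implicit Arguments. Unset Strict Implicit. Unset Printing Implicit Defensive.
Import Order.TTheory GRing.Theory Num.Theory.
Import numFieldNormedType.Exports.
Local Open Scope ring_scope.

Definition tanh {R : realType} (x : R) : R :=
  (expR x - expR (- x)) / (expR x + expR (- x)).

Definition magn {R : realType} {d : nat} (lam : 'I_d -> R) (q : 'I_d -> R) : R :=
  \sum_(l < d) lam l * q l.

Definition I0 {R : realType} {d : nat} (q : 'I_d -> R) : {set 'I_d} :=
  [set k : 'I_d | 0 < q k].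

(* lambda_+ = max_{k in I_0} lambda_k, lambda_- = min_{k in I_0} lambda_k
   (max/min of a finite set of reals, written as sup/inf of the image set) *)
Definition lam_plus {R : realType} {d : nat} (lam : 'I_d -> R) (q : 'I_d -> R) : R :=
  sup (lam @` [set k : 'I_d | k \in I0 q])%classic.
Definition lam_minus {R : realType} {d : nat} (lam : 'I_d -> R) (q : 'I_d -> R) : R :=
  inf (lam @` [set k : 'I_d | k \in I0 q])%classic.

Definition Iplus {R : realType} {d : nat} (lam : 'I_d -> R) (q : 'I_d -> R) : {set 'I_d} :=
  [set k in I0 q | lam k == lam_plus lam q].
Definition Iminus {R : realType} {d : nat} (lam : 'I_d -> R) (q : 'I_d -> R) : {set 'I_d} :=
  [set k in I0 q | lam k == lam_minus lam q].

From HB Require Import structures.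
From mathcomp Require Import all_boot all_order all_algebra.
From mathcomp Require Import all_classical all_reals all_analysis.
From mathcomp Require Import ring lra.
Import Order.TTheory GRing.Theory Num.Theory.
Import numFieldNormedType.Exports.
Local Open Scope classical_set_scope.
Local Open Scope ring_scope.

Set Implicit Arguments. Unset Strict Implicit. Unset Printing Implicit Defensive.

(* Along the flow, [p_k' = r_k p_k] with rate [r_k = 2 tanh(beta M) (lam_k - M)], and
   [M' = 2 tanh(beta M) Var_p(lam)], so [(M^2)' = 4 M tanh(beta M) Var_p(lam) >= 0].  If
   [M(0) = 0], a Gronwall bound [(M^2)' <= C M^2] keeps [M = 0], all rates vanish and [p] is
   constant.  If [M(0) > 0], [M] never crosses 0, so [M >= M(0)] and
   [tanh(beta M) >= tanh(beta M(0)) > 0].  The ratio [p_k / p_j] has logarithmic derivative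
   [2 tanh(beta M) (lam_k - lam_j)]: it is constant when [lam_k = lam_j] and decays
   exponentially when [lam_k < lam_j].  Comparing with some [j] in [I_+] kills every [k] outside
   [I_+], and the total mass 1 ends up shared within [I_+] in the initial proportions.  The case
   [M(0) < 0] is the case [M(0) > 0] for [- lam]. *)

Section Tanh.
Context {R : realType}.
Implicit Types x y : R.

Lemma tanh0 : tanh (0 : R) = 0.
Proof. by rewrite /tanh oppr0 subrr mul0r. Qed.

Lemma tanhN x : tanh (- x) = - tanh x.
Proof. by rewrite /tanh opprK [expR (- x) + expR x]addrC -[expR (- x) - expR x]opprB mulNr. Qed.

Lemma normr_tanh_le1 x : `|tanh x| <= 1.
Proof.
have ex := expR_gt0 x; have eNx := expR_gt0 (- x).
rewrite /tanh normrM normfV (gtr0_norm (addr_gt0 ex eNx)).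
by rewrite ler_pdivrMr ?addr_gt0 // mul1r ler_norml; apply/andP; split; lra.
Qed.

Lemma ler_tanh : {homo @tanh R : x y / x <= y}.
Proof.
move=> x y xy; have ex := expR_gt0 x; have eNx := expR_gt0 (- x).
have ey := expR_gt0 y; have eNy := expR_gt0 (- y).
have cross : expR x * expR (- y) <= expR y * expR (- x).
  by rewrite -!expRD ler_expR; lra.
rewrite /tanh ler_pdivrMr ?addr_gt0 // mulrAC ler_pdivlMr ?addr_gt0 //; nra.
Qed.

Lemma tanh_gt0 x : 0 < x -> 0 < tanh x.
Proof.
move=> x0; rewrite /tanh divr_gt0 //; last by rewrite addr_gt0 ?expR_gt0.
by rewrite subr_gt0 ltr_expR; lra.
Qed.

Lemma mulr_tanh_ge0 x : 0 <= x * tanh x.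
Proof.
wlog x0 : x / 0 <= x.
  by move=> H; have [/H //|x0] := leP 0 x; rewrite -mulrNN -tanhN H // oppr_ge0 ltW.
by rewrite mulr_ge0 // -tanh0 ler_tanh.
Qed.

Lemma mulr_tanh_le x : x * tanh x <= 2 * x ^+ 2.
Proof.
wlog x0 : x / 0 <= x.
  by move=> H; have [/H //|x0] := leP 0 x; rewrite -mulrNN -tanhN -sqrrN H // oppr_ge0 ltW.
suff : tanh x <= 2 * x by nra.
have ex := expR_gt0 x; have eNx := expR_gt0 (- x).
have ex_eNx : expR x * expR (- x) = 1 by rewrite -expRD subrr expR0.
(* [1 - 2x <= e^{-2x}] bounds the numerator [e^x - e^{-x}] by [2x (e^x + e^{-x})] *)
have : 1 - 2 * x <= expR (- x) * expR (- x).
  by rewrite -expRD; have := expR_ge1Dx (- (2 * x)); congr (_ <= expR _); lra.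
rewrite /tanh ler_pdivrMr ?addr_gt0 //; nra.
Qed.

End Tanh.

Section DeriveOnHalfLine.
Context {R : realType}.
Implicit Types (f df g dg : R -> R) (c : R).

Definition is_derive_pos f df :=
  f x @[x --> 0^'+] --> f 0 /\ forall t : R, 0 < t -> is_derive t 1 f (df t).

Lemma is_derive_pos_eq f df dg : is_derive_pos f df ->
  (forall t, 0 < t -> df t = dg t) -> is_derive_pos f dg.
Proof. by move=> [f0 fd] e; split => // t t0; rewrite -e //; exact: fd. Qed.

Lemma is_derive_pos_continuous f df : is_derive_pos f df ->
  {within `[0, +oo[, continuous f}.
Proof.
move=> [f0 fd]; apply/continuous_within_itvcyP; split => // x.
rewrite in_itv /= andbT => x0.
by have [/derivable1_diffP/differentiable_continuous] := fd x x0.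
Qed.

Lemma is_derive_pos_ge0_ndecr f df : is_derive_pos f df ->
  (forall t, 0 < t -> 0 <= df t) -> forall x y, 0 <= x -> x <= y -> f x <= f y.
Proof.
move=> fdf df_ge0; apply: ger0_derive1_ndecry; last exact: is_derive_pos_continuous fdf.
- by move=> t; rewrite in_itv /= andbT => t0; have [] := fdf.2 t t0.
- move=> t; rewrite in_itv /= andbT => t0.
  by rewrite derive1E (@derive_val _ _ _ _ _ _ _ (fdf.2 t t0)) df_ge0.
Qed.

Lemma is_derive_pos_le0_nincr f df : is_derive_pos f df ->
  (forall t, 0 < t -> df t <= 0) -> forall x y, 0 <= x -> x <= y -> f y <= f x.
Proof.
move=> fdf df_le0; apply: ler0_derive1_nincry; last exact: is_derive_pos_continuous fdf.
- by move=> t; rewrite in_itv /= andbT => t0; have [] := fdf.2 t t0.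
- move=> t; rewrite in_itv /= andbT => t0.
  by rewrite derive1E (@derive_val _ _ _ _ _ _ _ (fdf.2 t t0)) df_le0.
Qed.

Lemma is_derive_pos_cst c : is_derive_pos (fun=> c) (fun=> 0).
Proof. by split => [|t _]; [exact: cvg_cst | exact: is_derive_cst]. Qed.

Lemma is_derive_pos_opp f df : is_derive_pos f df ->
  is_derive_pos (fun t => - f t) (fun t => - df t).
Proof.
move=> [f0 fd]; split; first exact: cvgN.
by move=> t t0; exact: is_deriveN (fd t t0).
Qed.

Lemma is_derive_pos_mul f df g dg : is_derive_pos f df -> is_derive_pos g dg ->
  is_derive_pos (fun t => f t * g t) (fun t => f t * dg t + g t * df t).
Proof.
move=> [f0 fd] [g0 gd]; split; first exact: cvgM.
by move=> t t0; exact: is_deriveM (fd t t0) (gd t t0).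
Qed.

Lemma is_derive_pos_inv f df : (forall t, 0 <= t -> f t != 0) ->
  is_derive_pos f df -> is_derive_pos (fun t => (f t)^-1) (fun t => - df t / f t ^+ 2).
Proof.
move=> f_neq0 [f0 fd]; split; first by apply: cvgV => //; exact: f_neq0.
move=> t t0; apply: is_derive_eq (is_deriveV (f_neq0 t (ltW t0)) (fd t t0)) _.
by rewrite /GRing.scale /= mulrC mulrN mulNr.
Qed.

Lemma is_derive_pos_sum n (F dF : 'I_n -> R -> R) :
  (forall i, is_derive_pos (F i) (dF i)) ->
  is_derive_pos (fun t => \sum_(i < n) F i t) (fun t => \sum_(i < n) dF i t).
Proof.
move=> FdF; split.
  by apply: cvg_big => [|i _]; [exact: add_continuous | exact: (FdF i).1].
move=> t t0; have := is_derive_sum (fun i => (FdF i).2 t t0).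
by rewrite fct_sumE.
Qed.

Lemma is_derive_pos_expR c : is_derive_pos (fun t => expR (c * t)) (fun t => c * expR (c * t)).
Proof.
have cexp (t : R) : is_derive t 1 (fun s => expR (c * s)) (c * expR (c * t)).
  rewrite mulrC; apply: is_derive1_comp (is_derive_expR (c * t)) _.
  by apply: is_derive_eq (is_deriveZ c (is_derive_id t 1)) _; rewrite /GRing.scale /= mulr1.
split => [|t _]; last exact: cexp.
apply: cvg_at_right_filter.
by have [/derivable1_diffP/differentiable_continuous] := cexp 0.
Qed.

(* Multiplying by [expR (- c t)] turns [f' <= c f] into a nonincreasing function. *)
Lemma gronwall_le f df c : is_derive_pos f df ->
  (forall t, 0 < t -> df t <= c * f t) -> forall t, 0 <= t -> f t <= f 0 * expR (c * t).
Proof.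
move=> fdf df_le t t0.
have fE := is_derive_pos_mul fdf (is_derive_pos_expR (- c)).
have fE_le0 s : 0 < s -> f s * (- c * expR (- c * s)) + expR (- c * s) * df s <= 0.
  by move=> s0; have := df_le s s0; have := expR_gt0 (- c * s); nra.
have := is_derive_pos_le0_nincr fE fE_le0 (lexx 0) t0; rewrite mulr0 expR0 mulr1.
by move/(ler_wpM2r (expR_ge0 (c * t))); rewrite -mulrA -expRD mulNr addNr expR0 mulr1.
Qed.

Lemma gronwall_ge f df c : is_derive_pos f df ->
  (forall t, 0 < t -> c * f t <= df t) -> forall t, 0 <= t -> f 0 * expR (c * t) <= f t.
Proof.
move=> fdf df_ge t t0; rewrite -[leRHS]opprK -[leLHS]opprK lerN2 -mulNr.
by apply: gronwall_le (is_derive_pos_opp fdf) _ _ t0 => s s0; rewrite mulrN lerN2 df_ge.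
Qed.

Lemma is_derive_pos_const f df : is_derive_pos f df ->
  (forall t, 0 < t -> df t = 0) -> forall t, 0 <= t -> f t = f 0.
Proof.
move=> fdf df0 t t0; apply/le_anti/andP; split.
- by apply: is_derive_pos_le0_nincr fdf _ _ _ (lexx 0) t0 => s s0; rewrite df0.
- by apply: is_derive_pos_ge0_ndecr fdf _ _ _ (lexx 0) t0 => s s0; rewrite df0.
Qed.

End DeriveOnHalfLine.

Lemma eq_cvg_pinfty {R : realType} (f g : R -> R) (l : R) :
  (forall t, 0 <= t -> f t = g t) -> g t @[t --> +oo] --> l -> f t @[t --> +oo] --> l.
Proof.
move=> fg; apply: cvg_trans; apply: near_eq_cvg.
by near=> t; apply/esym/fg; near: t; apply: nbhs_pinfty_ge; exact: num_real.
Unshelve. all: by end_near.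
Qed.

Lemma cvg_pinfty_expR_bound0 {R : realType} (f : R -> R) (C c : R) : c < 0 ->
  (forall t, 0 <= t -> 0 <= f t <= C * expR (c * t)) -> f t @[t --> +oo] --> 0.
Proof.
move=> c_lt0 f_bnd.
have ct_y : (- c * t) @[t --> +oo] --> +oo.
  apply/cvgryPge => A; near=> t.
  by rewrite -ler_pdivrMl ?oppr_gt0 //; near: t; apply: nbhs_pinfty_ge; exact: num_real.
have Eto0 : C * expR (c * t) @[t --> +oo] --> 0.
  rewrite -(mulr0 C); apply: cvgMr.
  under eq_fun do rewrite -[c * _]opprK -mulNr.
  exact: cvg_comp ct_y (@cvgr_expR R).
apply: squeeze_cvgr Eto0; last exact: cvg_cst.
by near=> t; apply: f_bnd; near: t; apply: nbhs_pinfty_ge; exact: num_real.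
Unshelve. all: by end_near.
Qed.

Section ExtremalEigenvalues.
Context {R : realType} {d : nat}.
Implicit Types lam q : 'I_d -> R.

Lemma Iplus_argmax lam q j0 : j0 \in I0 q ->
  exists2 j, j \in Iplus lam q & {in I0 q, forall k, lam k <= lam j}.
Proof.
move=> j0_in; have [j j_in j_max] := @arg_maxP _ _ _ j0 (mem (I0 q)) lam j0_in.
suff lamE : lam_plus lam q = lam j by exists j => //; rewrite inE lamE eqxx andbT.
have lam_ub : ubound (lam @` [set k | k \in I0 q]) (lam j) by move=> _ [k k_in <-]; exact: j_max.
apply/le_anti/andP; split; first by rewrite ge_sup //; exists (lam j), j.
apply: sup_upper_bound; last by exists j.
by split; [exists (lam j), j | exists (lam j)].
Qed.

Lemma magnN lam q : magn (fun k => - lam k) q = - magn lam q.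
Proof. by rewrite /magn -sumrN; apply: eq_bigr => i _; rewrite mulNr. Qed.

Lemma lam_minus_plusN lam q : lam_minus lam q = - lam_plus (fun k => - lam k) q.
Proof. by rewrite /lam_minus /inf /lam_plus image_comp. Qed.

Lemma Iminus_plusN lam q : Iminus lam q = Iplus (fun k => - lam k) q.
Proof. by apply/setP => k; rewrite !inE lam_minus_plusN eqr_oppLR. Qed.

End ExtremalEigenvalues.

Section Flow.
Variables (R : realType) (d : nat) (beta : R) (lam : 'I_d -> R) (p : R -> 'I_d -> R).
Hypothesis beta_gt0 : 0 < beta.
Hypothesis p_ge0 : forall t : R, 0 <= t -> forall k : 'I_d, 0 <= p t k.
Hypothesis p_sum1 : forall t : R, 0 <= t -> \sum_(k < d) p t k = 1.
Hypothesis p_cont0 : forall k : 'I_d, p s k @[s --> 0^'+] --> p 0 k.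
Hypothesis p_ode : forall t : R, 0 < t -> forall k : 'I_d,
  is_derive t 1 (fun s => p s k)
    (2 * p t k * tanh (beta * magn lam (p t)) * (lam k - magn lam (p t))).

Let M t := magn lam (p t).
Let th t := tanh (beta * M t).
Let rate k t := 2 * th t * (lam k - M t).
Let V t := \sum_(l < d) p t l * (lam l - M t) ^+ 2.
Let Lam := \sum_(k < d) `|lam k|.

Lemma is_derive_pos_p k : is_derive_pos (fun t => p t k) (fun t => rate k t * p t k).
Proof.
split => [|t t0]; first exact: p_cont0.
by apply: is_derive_eq (p_ode t0 k) _; rewrite /rate /th /M; ring.
Qed.

Lemma p_le1 t k : 0 <= t -> p t k <= 1.
Proof.
move=> t0; rewrite -(p_sum1 t0) (bigD1 k) //= lerDl.
by apply: sumr_ge0 => i _; exact: p_ge0.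
Qed.

Lemma normr_lam_le k : `|lam k| <= Lam.
Proof. by rewrite /Lam (bigD1 k) //= lerDl sumr_ge0. Qed.

Lemma normr_M_le t : 0 <= t -> `|M t| <= Lam.
Proof.
move=> t0; apply: le_trans (ler_norm_sum _ _ _) _.
apply: le_trans (_ : \sum_(i < d) Lam * p t i <= _); last by rewrite -mulr_sumr p_sum1 ?mulr1.
apply: ler_sum => i _; rewrite normrM (ger0_norm (p_ge0 t0 i)).
by rewrite ler_wpM2r ?p_ge0 ?normr_lam_le.
Qed.

Lemma normr_lamBM_le k t : 0 <= t -> `|lam k - M t| <= 2 * Lam.
Proof.
move=> t0; apply: le_trans (ler_normB _ _) _.
by have := normr_lam_le k; have := normr_M_le t0; lra.
Qed.

Lemma normr_rate_le k t : 0 <= t -> `|rate k t| <= 4 * Lam.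
Proof.
move=> t0; rewrite /rate 2!normrM ger0_norm //.
have := normr_tanh_le1 (beta * M t); have := normr_lamBM_le k t0.
have := normr_ge0 (th t); have := normr_ge0 (lam k - M t); rewrite /th; nra.
Qed.

Lemma variance_ge0 t : 0 <= t -> 0 <= V t.
Proof. by move=> t0; apply: sumr_ge0 => i _; rewrite mulr_ge0 ?p_ge0 ?sqr_ge0. Qed.

Lemma variance_le t : 0 <= t -> V t <= 4 * Lam ^+ 2.
Proof.
move=> t0; apply: le_trans (_ : \sum_(i < d) p t i * (4 * Lam ^+ 2) <= _); last first.
  by rewrite -mulr_suml p_sum1 ?mul1r.
apply: ler_sum => i _; rewrite ler_wpM2l ?p_ge0 // -real_normK ?num_real //.
by have := normr_lamBM_le i t0; have := normr_ge0 (lam i - M t); nra.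
Qed.

Lemma is_derive_pos_M : is_derive_pos M (fun t => 2 * th t * V t).
Proof.
have Mdp := is_derive_pos_sum (fun l => is_derive_pos_mul (is_derive_pos_cst (lam l))
  (is_derive_pos_p l)).
apply: is_derive_pos_eq Mdp _ => t /ltW t0.
have centered : \sum_(l < d) p t l * (lam l - M t) = 0.
  rewrite (eq_bigr (fun l => lam l * p t l - M t * p t l)); last by move=> l _; ring.
  by rewrite sumrB -mulr_sumr p_sum1 // mulr1 subrr.
rewrite (eq_bigr (fun l => 2 * th t * (p t l * (lam l - M t) ^+ 2)
  + 2 * th t * M t * (p t l * (lam l - M t)))); last by move=> l _; rewrite /rate; ring.
by rewrite big_split /= -!mulr_sumr centered mulr0 addr0.
Qed.

Lemma p_gt0 k : 0 < p 0 k -> forall t, 0 <= t -> 0 < p t k.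
Proof.
move=> pk0 t t0; apply: lt_le_trans (gronwall_ge (c := - (4 * Lam)) (is_derive_pos_p k) _ t0).
  by rewrite mulr_gt0 ?expR_gt0.
move=> s /ltW s0; rewrite ler_wpM2r ?p_ge0 //.
by have := normr_rate_le k s0; rewrite ler_norml => /andP[].
Qed.

Lemma p_eq0 k : p 0 k = 0 -> forall t, 0 <= t -> p t k = 0.
Proof.
move=> pk0 t t0; apply/le_anti; rewrite p_ge0 // andbT.
apply: le_trans (gronwall_le (c := 4 * Lam) (is_derive_pos_p k) _ t0) _; last first.
  by rewrite pk0 mul0r.
move=> s /ltW s0; rewrite ler_wpM2r ?p_ge0 //.
by have := normr_rate_le k s0; rewrite ler_norml => /andP[].
Qed.

(* [(M^2)' = 4 M tanh(beta M) V <= 32 beta Lam^2 M^2], so [M^2] stays at its initial value 0. *)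
Lemma M_eq0 : M 0 = 0 -> forall t, 0 <= t -> M t = 0.
Proof.
move=> M00 t t0; apply/eqP; rewrite -sqrf_eq0 eq_le sqr_ge0 andbT expr2.
have M2d := is_derive_pos_mul is_derive_pos_M is_derive_pos_M.
apply: le_trans (gronwall_le (c := 32 * beta * Lam ^+ 2) M2d _ t0) _; last by rewrite M00 !mul0r.
move=> s /ltW s0.
have Mth_ge0 : 0 <= M s * th s by have := mulr_tanh_ge0 (beta * M s); rewrite -mulrA pmulr_rge0.
have Mth_le : M s * th s <= 2 * beta * M s ^+ 2.
  rewrite -(ler_pM2l beta_gt0); have := mulr_tanh_le (beta * M s); rewrite /th; lra.
have := variance_ge0 s0; have := variance_le s0; nra.
Qed.

Lemma p_stationary : M 0 = 0 -> forall t, 0 <= t -> forall k, p t k = p 0 k.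
Proof.
move=> M00 t t0 k; apply: is_derive_pos_const (is_derive_pos_p k) _ _ t0 => s /ltW s0.
by rewrite /rate /th M_eq0 // mulr0 tanh0 mulr0 !mul0r.
Qed.

Lemma is_derive_pos_ratio j k : 0 < p 0 j ->
  is_derive_pos (fun t => p t k / p t j)
    (fun t => 2 * th t * (lam k - lam j) * (p t k / p t j)).
Proof.
move=> pj0; have pj_neq0 t : 0 <= t -> p t j != 0 by move=> t0; rewrite gt_eqF // p_gt0.
have pkj := is_derive_pos_mul (is_derive_pos_p k) (is_derive_pos_inv pj_neq0 (is_derive_pos_p j)).
apply: is_derive_pos_eq pkj _ => t /ltW t0; have := pj_neq0 t t0; rewrite /rate.
by move: (th t) (M t) (p t j) => T m x x_neq0; field.
Qed.

Lemma ratio_const j k : 0 < p 0 j -> lam k = lam j ->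
  forall t, 0 <= t -> p t k / p t j = p 0 k / p 0 j.
Proof.
move=> pj0 lamE; apply: is_derive_pos_const (is_derive_pos_ratio k pj0) _ => t _.
by rewrite lamE subrr mulr0 mul0r.
Qed.

Section PositiveMagnetization.
Hypothesis M0_gt0 : 0 < M 0.

Lemma M_ge_M0 t : 0 <= t -> M 0 <= M t.
Proof.
move=> t0.
have M2_ge s : 0 <= s -> M 0 * M 0 <= M s * M s.
  apply: is_derive_pos_ge0_ndecr (is_derive_pos_mul is_derive_pos_M is_derive_pos_M) _ _ _ (lexx 0).
  move=> r /ltW r0; have := variance_ge0 r0.
  by have := mulr_tanh_ge0 (beta * M r); rewrite -mulrA pmulr_rge0 // -/(th r); nra.
suff Mt_gt0 : 0 < M t by have := M2_ge t t0; nra.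
rewrite ltNge; apply/negP => Mt_le0.
have [c /andP[c0 _] Mc0] : exists2 c, c \in `[0, t] & M c = 0.
  apply: IVT t0 _ _; last by rewrite ge_min Mt_le0 orbT le_max (ltW M0_gt0).
  apply: continuous_subspaceW (is_derive_pos_continuous is_derive_pos_M).
  exact: subset_itvl.
by have := M2_ge c c0; rewrite Mc0 mul0r leNgt mulr_gt0.
Qed.

Lemma th_ge_th0 t : 0 <= t -> th 0 <= th t.
Proof. by move=> t0; rewrite ler_tanh // ler_wpM2l ?(ltW beta_gt0) ?M_ge_M0. Qed.

Lemma p_decay j k : 0 < p 0 j -> lam k <= lam j -> forall t, 0 <= t ->
  p t k <= p 0 k / p 0 j * expR (2 * th 0 * (lam k - lam j) * t).
Proof.
move=> pj0 lam_kj t t0.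
apply: le_trans (gronwall_le (is_derive_pos_ratio k pj0) _ t0).
  have ptj := p_gt0 pj0 t0; rewrite ler_pdivlMr // ler_piMr ?p_ge0 ?p_le1 //.
move=> s /ltW s0; rewrite ler_wpM2r ?divr_ge0 ?p_ge0 //.
by rewrite ler_wnM2r ?subr_le0 // ler_wpM2l ?th_ge_th0.
Qed.

Lemma cvg_p_notin_Iplus k : k \notin Iplus lam (p 0) -> p t k @[t --> +oo] --> 0.
Proof.
move=> k_notin; have [pk0_gt0|] := ltP 0 (p 0 k); last first.
  move=> pk0_le0; have pk0 : p 0 k = 0 by apply/le_anti; rewrite pk0_le0 p_ge0.
  by apply: eq_cvg_pinfty (cvg_cst 0) => t t0; rewrite p_eq0.
have k_in : k \in I0 (p 0) by rewrite inE.
have [j j_plus lam_max] := Iplus_argmax lam k_in.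
move: j_plus (j_plus); rewrite inE => /andP[j_in /eqP lam_j] j_plus.
have lam_kj : lam k < lam j.
  rewrite lt_def lam_max // andbT; apply: contraNneq k_notin => lam_jk.
  by rewrite inE k_in -lam_jk lam_j eqxx.
have pj0 : 0 < p 0 j by move: j_in; rewrite inE.
apply: (@cvg_pinfty_expR_bound0 _ _ (p 0 k / p 0 j) (2 * th 0 * (lam k - lam j))).
  by rewrite pmulr_rlt0 ?subr_lt0 // mulr_gt0 // tanh_gt0 // mulr_gt0.
by move=> t t0; rewrite p_ge0 // p_decay // ltW.
Qed.

Lemma cvg_sum_Iplus : \sum_(j in Iplus lam (p 0)) p t j @[t --> +oo] --> (1 : R).
Proof.
have rest0 : \sum_(j | j \notin Iplus lam (p 0)) p t j @[t --> +oo] --> 0.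
  have := cvg_big (x0 := 0) (P := fun j => j \notin Iplus lam (p 0)) add_continuous
    (r := index_enum 'I_d) (Ff := fun j t => p t j) (Fa := fun=> 0) _ cvg_p_notin_Iplus.
  by rewrite big1_eq; apply.
rewrite -[1]subr0.
apply: (eq_cvg_pinfty (g := fun t => 1 - \sum_(j | j \notin Iplus lam (p 0)) p t j)) => [t t0|].
  by rewrite -(p_sum1 t0) [in RHS](bigID (fun j => j \in Iplus lam (p 0))) /= addrK.
exact: cvgB (cvg_cst (1 : R)) rest0.
Qed.

Lemma cvg_p_in_Iplus k : k \in Iplus lam (p 0) ->
  p t k @[t --> +oo] --> p 0 k / \sum_(j in Iplus lam (p 0)) p 0 j.
Proof.
move=> k_plus; move: (k_plus); rewrite inE => /andP[k_in /eqP lam_k].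
have pk0 : 0 < p 0 k by move: k_in; rewrite inE.
have S0_gt0 : 0 < \sum_(j in Iplus lam (p 0)) p 0 j.
  by rewrite (bigD1 k) //= ltr_wpDr // sumr_ge0 // => j _; exact: p_ge0.
set c := p 0 k / _; rewrite -[c]mulr1.
apply: (eq_cvg_pinfty (g := fun t => c * \sum_(j in Iplus lam (p 0)) p t j)) => [t t0|]; last first.
  exact: cvgM (cvg_cst c) cvg_sum_Iplus.
have ptk := p_gt0 pk0 t0.
have sumE : \sum_(j in Iplus lam (p 0)) p t j = p t k / p 0 k * \sum_(j in Iplus lam (p 0)) p 0 j.
  rewrite mulr_sumr; apply: eq_bigr => j; rewrite inE => /andP[_ /eqP lam_j].
  by rewrite -(divfK (lt0r_neq0 ptk) (p t j)) (ratio_const pk0) ?lam_j //; ring.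
by rewrite sumE /c; field; rewrite !gt_eqF.
Qed.

(* Since [sum_l p_l = 1], [M - lam_+ = sum_l (lam_l - lam_+) p_l], where the terms with
   [l \in I_+] vanish and the others tend to 0. *)
Lemma cvg_M_lam_plus : M t @[t --> +oo] --> lam_plus lam (p 0).
Proof.
set lp := lam_plus lam (p 0); rewrite -[lp]addr0.
have terms0 l : (lam l - lp) * p t l @[t --> +oo] --> 0.
  have [l_plus|l_notin] := boolP (l \in Iplus lam (p 0)).
    move: l_plus; rewrite inE => /andP[_ /eqP ->]; rewrite subrr.
    by under eq_fun do rewrite mul0r; exact: cvg_cst.
  by rewrite -(mulr0 (lam l - lp)); apply: cvgMr; exact: cvg_p_notin_Iplus.
apply: (eq_cvg_pinfty (g := fun t => lp + \sum_(l < d) (lam l - lp) * p t l)).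
  move=> t t0; under eq_bigr do rewrite mulrBl.
  by rewrite sumrB -mulr_sumr p_sum1 // mulr1 addrC subrK.
apply: cvgD; first exact: cvg_cst.
have := cvg_big (x0 := 0) (P := xpredT) add_continuous (r := index_enum 'I_d)
  (Ff := fun l t => (lam l - lp) * p t l) (Fa := fun=> 0) _ (fun l _ => terms0 l).
by rewrite big1_eq; apply.
Qed.

Lemma flow_pos :
  (forall k, k \notin Iplus lam (p 0) -> p t k @[t --> +oo] --> 0) /\
  (forall k, k \in Iplus lam (p 0) ->
     p t k @[t --> +oo] --> p 0 k / \sum_(j in Iplus lam (p 0)) p 0 j) /\
  M t @[t --> +oo] --> lam_plus lam (p 0).
Proof.
by split; [|split]; [exact: cvg_p_notin_Iplus | exact: cvg_p_in_Iplus | exact: cvg_M_lam_plus].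
Qed.

End PositiveMagnetization.

End Flow.

Theorem proposition4p5 (R : realType) (d : nat) (beta : R)
  (lam : 'I_d -> R) (p : R -> 'I_d -> R) :
  0 < beta ->
  (* p(t) is a probability vector for all t >= 0 *)
  (forall t : R, 0 <= t -> forall k : 'I_d, 0 <= p t k) ->
  (forall t : R, 0 <= t -> \sum_(k < d) p t k = 1) ->
  (* p is a solution on [0, +oo): continuous at 0 from the right, and
     satisfies the ODE at every t > 0 *)
  (forall k : 'I_d, p s k @[s --> 0^'+] --> p 0 k) ->
  (forall t : R, 0 < t -> forall k : 'I_d,
     is_derive t 1 (fun s => p s k)
       (2 * p t k * tanh (beta * magn lam (p t)) * (lam k - magn lam (p t)))) ->
  (* (1) *)
  (0 < magn lam (p 0) ->
     (forall k : 'I_d, k \notin Iplus lam (p 0) -> p t k @[t --> +oo] --> 0) /\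
     (forall k : 'I_d, k \in Iplus lam (p 0) ->
        p t k @[t --> +oo] --> p 0 k / \sum_(j in Iplus lam (p 0)) p 0 j) /\
     magn lam (p t) @[t --> +oo] --> lam_plus lam (p 0)) /\
  (* (2) *)
  (magn lam (p 0) < 0 ->
     (forall k : 'I_d, k \notin Iminus lam (p 0) -> p t k @[t --> +oo] --> 0) /\
     (forall k : 'I_d, k \in Iminus lam (p 0) ->
        p t k @[t --> +oo] --> p 0 k / \sum_(j in Iminus lam (p 0)) p 0 j) /\
     magn lam (p t) @[t --> +oo] --> lam_minus lam (p 0)) /\
  (* (3) *)
  (magn lam (p 0) = 0 -> forall t : R, 0 <= t -> forall k : 'I_d, p t k = p 0 k).
Proof.
move=> beta_gt0 p_ge0 p_sum1 p_cont0 p_ode.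
split; first exact: flow_pos.
split; last exact: p_stationary.
move=> M0_lt0; pose lamN k := - lam k.
have p_odeN (t : R) (t0 : 0 < t) k : is_derive t 1 (fun s => p s k)
    (2 * p t k * tanh (beta * magn lamN (p t)) * (lamN k - magn lamN (p t))).
  by apply: is_derive_eq (p_ode t t0 k) _; rewrite /lamN magnN mulrN tanhN; ring.
have [|cvg_out [cvg_in cvg_M]] := flow_pos beta_gt0 p_ge0 p_sum1 p_cont0 p_odeN.
  by rewrite magnN oppr_gt0.
rewrite Iminus_plusN lam_minus_plusN; split=> //; split=> //.
apply: (eq_cvg_pinfty (g := fun t => - magn lamN (p t))); last exact: cvgN.
by move=> t _; rewrite magnN opprK.
Qed.
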